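(* If the joint state space is the minimal tensor product, $\Omega_{AB}=\Omega_A\otimes_{\min}\Omega_B$, then for any set of allowed local transformations on $A$ one has $\chi_{DC}(\Omega_{AB})\le\chi_C(\Omega_A)$; i.e. superdense coding (a state $\phi$ with $\chi_{DC}(\phi)>\chi_C(\Omega_A)$) is impossible.
   Context: Single systems: $\Omega_A\subset\mathbb R^{n_A+1}$, $\Omega_B\subset\mathbb R^{n_B+1}$ are GPT state spaces of the form $\{(1,r)^{\mathrm t}: r\in\mathcal R\}$ with $\mathcal R$ compact convex, unit effects $u_A,u_B=(1,\mathbf 0)^{\mathrm t}$, effect sets $\mathcal E_A=\{e:0\le e\cdot\omega\le1\ \forall\omega\in\Omega_A\}$ (similarly $\mathcal E_B$). Bipartite states are real $(n_A+1)\times(n_B+1)$ matrices, identified with $\mathbb R^{n_A+1}\otimes\mathbb R^{n_B+1}$ via $v\otimes w=vw^{\mathrm t}$, inner product $X\cdot Y=\mathrm{Tr}(X^{\mathrm t}Y)$. $\Omega_A\otimes_{\min}\Omega_B$ is the convex hull of $\{\omega_A\otimes\omega_B:\omega_A\in\Omega_A,\omega_B\in\Omega_B\}$. Effects of a joint state space $\Omega_{AB}$: $\mathcal E_{AB}=\{E:0\le E\cdot\phi\le1\ \forall\phi\in\Omega_{AB}\}$; measurements are finite families in $\mathcal E_{AB}$ summing to $u_A\otimes u_B$. An allowed local transformation on $A$ is a linear map $T$ of $\mathbb R^{n_A+1}$ with $T\Omega_A\subseteq\Omega_A$ and $T\phi\in\Omega_{AB}$ for all $\phi\in\Omega_{AB}$.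 Classical capacity $\chi_C(\Omega_A)$: supremum of $I(X:Y)$ over finite message distributions $p_x$, states $\omega_x\in\Omega_A$ and measurements $\{e_y\}\subset\mathcal E_A$ with $p(y|x)=e_y\cdot\omega_x$. A dense coding protocol with initial state $\phi\in\Omega_{AB}$ consists of a finite message distribution $p_x$, allowed local transformations $T_x$ on $A$, and a measurement $\{E_y\}\subset\mathcal E_{AB}$, with $p(y|x)=E_y\cdot(T_x\phi)$; $\chi_{DC}(\phi)$ is the supremum of $I(X:Y)$ over such protocols and $\chi_{DC}(\Omega_{AB})=\sup_\phi\chi_{DC}(\phi)$. *)

From Stdlib Require Import Reals.
Open Scope R_scope.

(* Vectors of R^{n+1} are represented as functions nat -> R vanishing at indices > n
   (coordinates 0..n); real (n_A+1)x(n_B+1) matrices as nat -> nat -> R vanishing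
   outside the index box. *)
Definition vec := nat -> R.
Definition mat := nat -> nat -> R.

Fixpoint rsum (m : nat) (f : nat -> R) : R :=
  match m with
  | O => 0
  | S k => rsum k f + f k
  end.

Definition supp1 (n : nat) (v : vec) : Prop := forall i, (n < i)%nat -> v i = 0.
Definition supp2 (nA nB : nat) (X : mat) : Prop :=
  forall i j, (nA < i)%nat \/ (nB < j)%nat -> X i j = 0.

Definition dot (n : nat) (v w : vec) : R := rsum (S n) (fun i => v i * w i).
Definition dot2 (nA nB : nat) (X Y : mat) : R :=
  rsum (S nA) (fun i => rsum (S nB) (fun j => X i j * Y i j)).

Definition tensor (v w : vec) : mat := fun i j => v i * w j.

Definition unit_eff : vec := fun i => match i with O => 1 | _ => 0 end.

Definition cons1 (r : vec) : vec := fun i => match i with O => 1 | S k => r k end.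

(* compact convex subsets of R^n (compact = closed and bounded, Heine-Borel) *)
Definition convex_set (n : nat) (S : vec -> Prop) : Prop :=
  forall r s t, S r -> S s -> 0 <= t <= 1 -> S (fun i => t * r i + (1 - t) * s i).
Definition bounded_set (n : nat) (S : vec -> Prop) : Prop :=
  exists M, forall r i, S r -> (i < n)%nat -> Rabs (r i) <= M.
Definition closed_set (n : nat) (S : vec -> Prop) : Prop :=
  forall (u : nat -> vec) (r : vec),
    (forall k, S (u k)) -> (forall i, (n <= i)%nat -> r i = 0) ->
    (forall i, (i < n)%nat -> Un_cv (fun k => u k i) (r i)) -> S r.
Definition in_Rn (n : nat) (r : vec) : Prop := forall i, (n <= i)%nat -> r i = 0.

Definition gpt_state_space (n : nat) (Om : vec -> Prop) : Prop :=
  exists Rset : vec -> Prop,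
    (forall r, Rset r -> in_Rn n r) /\
    convex_set n Rset /\ bounded_set n Rset /\ closed_set n Rset /\
    (forall w, Om w <-> exists r, Rset r /\ w = cons1 r).

Definition effect (n : nat) (Om : vec -> Prop) (e : vec) : Prop :=
  supp1 n e /\ forall w, Om w -> 0 <= dot n e w <= 1.

Definition min_tensor (OmA OmB : vec -> Prop) (phi : mat) : Prop :=
  exists (m : nat) (lam : nat -> R) (a b : nat -> vec),
    (forall k, (k < m)%nat -> 0 <= lam k /\ OmA (a k) /\ OmB (b k)) /\
    rsum m lam = 1 /\
    phi = (fun i j => rsum m (fun k => lam k * a k i * b k j)).

Definition joint_effect (nA nB : nat) (OmAB : mat -> Prop) (E : mat) : Prop :=
  supp2 nA nB E /\ forall phi, OmAB phi -> 0 <= dot2 nA nB E phi <= 1.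

Definition apply1 (nA : nat) (T : mat) (v : vec) : vec :=
  fun i => rsum (S nA) (fun k => T i k * v k).
Definition applyA (nA : nat) (T : mat) (phi : mat) : mat :=
  fun i j => rsum (S nA) (fun k => T i k * phi k j).

Definition allowed_local (nA nB : nat) (OmA : vec -> Prop) (OmAB : mat -> Prop) (T : mat) : Prop :=
  supp2 nA nA T /\
  (forall w, OmA w -> OmA (apply1 nA T w)) /\
  (forall phi, OmAB phi -> OmAB (applyA nA T phi)).

Definition prob_dist (m : nat) (p : nat -> R) : Prop :=
  (forall x, (x < m)%nat -> 0 <= p x) /\ rsum m p = 1.

Definition log2 (x : R) : R := ln x / ln 2.

(* mutual information I(X:Y) for p(x) and channel p(y|x) = q x y,
   x < m, y < k, with the convention 0 log 0 = 0 *)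
Definition mutual_info (m k : nat) (p : nat -> R) (q : nat -> nat -> R) : R :=
  rsum m (fun x => rsum k (fun y =>
    let pxy := p x * q x y in
    let py := rsum m (fun x' => p x' * q x' y) in
    if Req_EM_T pxy 0 then 0 else pxy * log2 (q x y / py))).

Definition classical_values (nA : nat) (OmA : vec -> Prop) (v : R) : Prop :=
  exists (m : nat) (p : nat -> R) (om : nat -> vec) (k : nat) (e : nat -> vec),
    prob_dist m p /\
    (forall x, (x < m)%nat -> OmA (om x)) /\
    (forall y, (y < k)%nat -> effect nA OmA (e y)) /\
    (forall i, rsum k (fun y => e y i) = unit_eff i) /\
    v = mutual_info m k p (fun x y => dot nA (e y) (om x)).

Definition dc_values_state (nA nB : nat) (OmA : vec -> Prop) (OmAB : mat -> Prop)
    (Tset : mat -> Prop) (phi : mat) (v : R) : Prop :=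
  exists (m : nat) (p : nat -> R) (T : nat -> mat) (k : nat) (E : nat -> mat),
    prob_dist m p /\
    (forall x, (x < m)%nat -> Tset (T x) /\ allowed_local nA nB OmA OmAB (T x)) /\
    (forall y, (y < k)%nat -> joint_effect nA nB OmAB (E y)) /\
    (forall i j, rsum k (fun y => E y i j) = tensor unit_eff unit_eff i j) /\
    v = mutual_info m k p (fun x y => dot2 nA nB (E y) (applyA nA (T x) phi)).

(* values for some initial state phi in OmAB : sup of these is chi_DC(OmAB) *)
Definition dc_values (nA nB : nat) (OmA : vec -> Prop) (OmAB : mat -> Prop)
    (Tset : mat -> Prop) (v : R) : Prop :=
  exists phi, OmAB phi /\ dc_values_state nA nB OmA OmAB Tset phi v.

From Stdlib Require Import Reals Lra Lia Psatz FunctionalExtensionality.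
Open Scope R_scope.

(* A state of the minimal tensor product is a mixture sum_k lam_k a_k (x) b_k of
   product states.  Conditioning a joint effect E on the B-state b_k gives an
   effect on A, and conditioning a joint measurement gives a measurement on A,
   so the channel of any dense coding protocol is the mixture, with weights
   lam_k, of the channels of classical protocols with the states T_x a_k.
   Mutual information is convex in the channel for a fixed input distribution
   (log-sum inequality), hence it is bounded by every bound on chi_C. *)

Lemma rsum_ext n f g :
  (forall i, (i < n)%nat -> f i = g i) -> rsum n f = rsum n g.
Proof.
  induction n as [|n IH]; intros H; simpl; [reflexivity|].
  rewrite IH by (intros; apply H; lia).
  rewrite H by lia; reflexivity.
Qed.

Lemma rsum_le n f g :
  (forall i, (i < n)%nat -> f i <= g i) -> rsum n f <= rsum n g.
Proof.
  induction n as [|n IH]; intros H; simpl; [lra|].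
  assert (rsum n f <= rsum n g) by (apply IH; intros; apply H; lia).
  assert (f n <= g n) by (apply H; lia).
  lra.
Qed.

Lemma rsum_nonneg n f : (forall i, (i < n)%nat -> 0 <= f i) -> 0 <= rsum n f.
Proof.
  intros H. replace 0 with (rsum n (fun _ => 0)).
  - apply rsum_le; exact H.
  - induction n as [|n IH]; simpl; [reflexivity|].
    rewrite IH by (intros; apply H; lia); ring.
Qed.

Lemma rsum_const0 n : rsum n (fun _ => 0) = 0.
Proof. induction n as [|n IH]; simpl; [|rewrite IH]; ring. Qed.

Lemma rsum_ge_term n f k :
  (forall i, (i < n)%nat -> 0 <= f i) -> (k < n)%nat -> f k <= rsum n f.
Proof.
  induction n as [|n IH]; intros H Hk; simpl; [lia|].
  assert (0 <= rsum n f) by (apply rsum_nonneg; intros; apply H; lia).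
  destruct (Nat.eq_dec k n) as [->|Hkn]; [lra|].
  assert (f k <= rsum n f) by (apply IH; [intros; apply H|]; lia).
  assert (0 <= f n) by (apply H; lia).
  lra.
Qed.

Lemma rsum_pos_ex n f : 0 < rsum n f -> exists k, (k < n)%nat /\ 0 < f k.
Proof.
  induction n as [|n IH]; simpl; intros H; [lra|].
  destruct (Rlt_dec 0 (f n)) as [Hn|Hn]; [exists n; split; auto|].
  destruct IH as [k [Hk Hf]]; [lra|].
  exists k; split; auto.
Qed.

Lemma rsum_mult_l n c f : c * rsum n f = rsum n (fun i => c * f i).
Proof. induction n as [|n IH]; simpl; [|rewrite <- IH]; ring. Qed.

Lemma rsum_mult_r n c f : rsum n f * c = rsum n (fun i => f i * c).
Proof. induction n as [|n IH]; simpl; [|rewrite <- IH]; ring. Qed.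

Lemma rsum_add n f g : rsum n (fun i => f i + g i) = rsum n f + rsum n g.
Proof. induction n as [|n IH]; simpl; [|rewrite IH]; ring. Qed.

Lemma rsum_swap n m (f : nat -> nat -> R) :
  rsum n (fun i => rsum m (fun j => f i j)) =
  rsum m (fun j => rsum n (fun i => f i j)).
Proof.
  induction n as [|n IH]; simpl; [symmetry; apply rsum_const0|].
  rewrite IH, <- rsum_add; reflexivity.
Qed.

Lemma rsum_unit_eff n f : rsum (S n) (fun j => unit_eff j * f j) = f 0%nat.
Proof.
  induction n as [|n IH]; [simpl; ring|].
  change (rsum (S n) (fun j => unit_eff j * f j) + unit_eff (S n) * f (S n)
          = f 0%nat).
  rewrite IH; simpl; ring.
Qed.

Definition xlog_ratio (a b : R) : R := if Req_EM_T a 0 then 0 else a * ln (a / b).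

Lemma div_cancel_l l a b : l <> 0 -> l * a / (l * b) = a / b.
Proof.
  intros Hl; unfold Rdiv; rewrite Rinv_mult.
  replace (l * a * (/ l * / b)) with ((l * / l) * (a * / b)) by ring.
  rewrite Rinv_r by exact Hl; ring.
Qed.

Lemma xlog_ratio_scale l a b :
  0 <= l -> l * xlog_ratio a b = xlog_ratio (l * a) (l * b).
Proof.
  intros Hl; unfold xlog_ratio.
  destruct (Req_EM_T a 0) as [Ha|Ha]; destruct (Req_EM_T (l * a) 0) as [Hla|Hla].
  - ring.
  - exfalso; apply Hla; rewrite Ha; ring.
  - destruct (Rmult_integral _ _ Hla) as [->|]; [ring|contradiction].
  - assert (l <> 0) by (intros ->; apply Hla; ring).
    rewrite div_cancel_l by assumption; ring.
Qed.

Lemma ln_le_sub1 t : 0 < t -> ln t <= t - 1.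
Proof.
  intros Ht; pose proof (exp_ineq1_le (ln t)) as H.
  rewrite exp_ln in H by exact Ht; lra.
Qed.

Lemma xlog_ratio_ge_tangent a b s :
  0 <= a -> 0 <= b -> (0 < a -> 0 < b) -> 0 < s ->
  a * ln s + a - b * s <= xlog_ratio a b.
Proof.
  intros Ha Hb Hab Hs; unfold xlog_ratio.
  destruct (Req_EM_T a 0) as [->|Ha0]; [nra|].
  assert (Ha' : 0 < a) by lra; specialize (Hab Ha').
  pose proof (ln_le_sub1 (b * s / a) ltac:(apply Rdiv_lt_0_compat; nra)) as Hl.
  unfold Rdiv in *.
  rewrite !ln_mult, ln_Rinv in * by (try apply Rinv_0_lt_compat; nra).
  assert (a * (b * s * / a) = b * s) by (field; lra).
  nra.
Qed.

Lemma log_sum_inequality M a b :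
  (forall k, (k < M)%nat -> 0 <= a k /\ 0 <= b k /\ (0 < a k -> 0 < b k)) ->
  xlog_ratio (rsum M a) (rsum M b) <= rsum M (fun k => xlog_ratio (a k) (b k)).
Proof.
  intros H.
  assert (HA : 0 <= rsum M a) by (apply rsum_nonneg; intros; apply H; auto).
  destruct (Req_EM_T (rsum M a) 0) as [HA0|HA0].
  - assert (Hterms : forall k, (k < M)%nat -> xlog_ratio (a k) (b k) = 0).
    { intros k Hk.
      assert (a k <= rsum M a) by (apply rsum_ge_term; auto; intros; apply H; auto).
      assert (a k = 0) by (destruct (H k Hk); lra).
      unfold xlog_ratio; destruct (Req_EM_T (a k) 0); [reflexivity|contradiction]. }
    rewrite (rsum_ext _ _ _ Hterms), rsum_const0.
    unfold xlog_ratio; destruct (Req_EM_T (rsum M a) 0); [lra|contradiction].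
  - destruct (rsum_pos_ex M a ltac:(lra)) as [k [Hk Hak]].
    assert (HB : 0 < rsum M b).
    { apply Rlt_le_trans with (b k); [apply H; auto|].
      apply rsum_ge_term; auto; intros; apply H; auto. }
    (* the tangent at s = (sum a) / (sum b) is exact for the sums *)
    set (s := rsum M a / rsum M b).
    assert (Hs : 0 < s) by (apply Rdiv_lt_0_compat; lra).
    assert (Hlin : forall N L t, rsum N (fun k => a k * L + a k - b k * t)
                                 = rsum N a * L + rsum N a - rsum N b * t).
    { intros N L t; induction N as [|N IH]; simpl; [|rewrite IH]; ring. }
    apply Rle_trans with (rsum M (fun k => a k * ln s + a k - b k * s)).
    + rewrite Hlin; unfold xlog_ratio.
      destruct (Req_EM_T (rsum M a) 0); [contradiction|].
      assert (rsum M b * s = rsum M a) by (unfold s; field; lra).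
      fold s; lra.
    + apply rsum_le; intros i Hi.
      destruct (H i Hi) as [? [? ?]]; apply xlog_ratio_ge_tangent; auto.
Qed.

Definition mi_term (m : nat) (p : nat -> R) (q : nat -> nat -> R) (x y : nat) : R :=
  let pxy := p x * q x y in
  let py := rsum m (fun x' => p x' * q x' y) in
  if Req_EM_T pxy 0 then 0 else pxy * log2 (q x y / py).

Lemma mutual_info_mi_term m k p q :
  mutual_info m k p q = rsum m (fun x => rsum k (fun y => mi_term m p q x y)).
Proof. reflexivity. Qed.

Lemma ln2_pos : 0 < ln 2.
Proof. pose proof ln_lt_2; lra. Qed.

Lemma mi_term_xlog_ratio m p q x y :
  mi_term m p q x y
  = xlog_ratio (p x * q x y) (p x * rsum m (fun x' => p x' * q x' y)) / ln 2.
Proof.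
  unfold mi_term, xlog_ratio, log2; pose proof ln2_pos.
  destruct (Req_EM_T (p x * q x y) 0) as [|Hpq]; [field; lra|].
  assert (p x <> 0) by (intros Hp; apply Hpq; rewrite Hp; ring).
  rewrite div_cancel_l by assumption; field; lra.
Qed.

Section MutualInfoConvex.

Variables (m K M : nat) (p lam : nat -> R) (Q : nat -> nat -> nat -> R).
Hypothesis p_nonneg : forall x, (x < m)%nat -> 0 <= p x.
Hypothesis lam_nonneg : forall k, (k < M)%nat -> 0 <= lam k.
Hypothesis Q_nonneg :
  forall k x y, (k < M)%nat -> (x < m)%nat -> (y < K)%nat -> 0 <= Q k x y.

Let Qmix x y := rsum M (fun k => lam k * Q k x y).

Lemma mi_term_convex x y : (x < m)%nat -> (y < K)%nat ->
  mi_term m p Qmix x y <= rsum M (fun k => lam k * mi_term m p (Q k) x y).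
Proof.
  intros Hx Hy.
  set (P k := rsum m (fun x' => p x' * Q k x' y)).
  assert (HP : forall k, (k < M)%nat -> 0 <= P k).
  { intros k Hk; apply rsum_nonneg; intros x' Hx'.
    apply Rmult_le_pos; auto. }
  assert (Hterm : forall k, (k < M)%nat -> lam k * mi_term m p (Q k) x y
            = xlog_ratio (p x * (lam k * Q k x y)) (p x * (lam k * P k)) / ln 2).
  { intros k Hk; rewrite mi_term_xlog_ratio; unfold Rdiv.
    rewrite <- Rmult_assoc, xlog_ratio_scale by auto.
    unfold P; f_equal; f_equal; ring. }
  assert (HPmix : p x * rsum m (fun x' => p x' * Qmix x' y)
                  = rsum M (fun k => p x * (lam k * P k))).
  { unfold Qmix.
    rewrite (rsum_ext m _ (fun x' => rsum M (fun k => lam k * (p x' * Q k x' y))))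
      by (intros; rewrite rsum_mult_l; apply rsum_ext; intros; ring).
    rewrite rsum_swap, rsum_mult_l; apply rsum_ext; intros k _.
    unfold P; rewrite !rsum_mult_l; apply rsum_ext; intros; ring. }
  rewrite (rsum_ext _ _ _ Hterm), mi_term_xlog_ratio, HPmix.
  unfold Rdiv; rewrite <- rsum_mult_r.
  apply Rmult_le_compat_r; [left; apply Rinv_0_lt_compat, ln2_pos|].
  unfold Qmix; rewrite rsum_mult_l.
  apply log_sum_inequality; intros k Hk.
  pose proof (p_nonneg x Hx); pose proof (lam_nonneg k Hk).
  pose proof (Q_nonneg k x y Hk Hx Hy); pose proof (HP k Hk).
  assert (Hpos_l : 0 <= p x * (lam k * Q k x y))
    by (apply Rmult_le_pos; [|apply Rmult_le_pos]; assumption).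
  assert (Hpos_r : 0 <= p x * (lam k * P k))
    by (apply Rmult_le_pos; [|apply Rmult_le_pos]; assumption).
  split; [exact Hpos_l|split; [exact Hpos_r|intros Hpos]].
  assert (0 < p x * Q k x y) by nra.
  assert (p x * Q k x y <= P k).
  { apply (rsum_ge_term m (fun x' => p x' * Q k x' y)); auto.
    intros; apply Rmult_le_pos; auto. }
  assert (0 < lam k) by nra.
  nra.
Qed.

Lemma mutual_info_convex :
  mutual_info m K p Qmix <= rsum M (fun k => lam k * mutual_info m K p (Q k)).
Proof.
  rewrite mutual_info_mi_term.
  apply Rle_trans with
    (rsum m (fun x => rsum K (fun y => rsum M (fun k => lam k * mi_term m p (Q k) x y)))).
  - apply rsum_le; intros x Hx; apply rsum_le; intros y Hy.
    apply mi_term_convex; assumption.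
  - right.
    rewrite (rsum_ext m _ (fun x => rsum M (fun k => rsum K (fun y =>
               lam k * mi_term m p (Q k) x y)))) by (intros; apply rsum_swap).
    rewrite rsum_swap; apply rsum_ext; intros k _.
    rewrite mutual_info_mi_term, rsum_mult_l; apply rsum_ext; intros x _.
    symmetry; apply rsum_mult_l.
Qed.

End MutualInfoConvex.

Definition cond_effect (nB : nat) (E : mat) (b : vec) : vec :=
  fun i => rsum (S nB) (fun j => E i j * b j).

Lemma dot2_tensor nA nB E w b :
  dot2 nA nB E (tensor w b) = dot nA (cond_effect nB E b) w.
Proof.
  unfold dot2, dot, cond_effect, tensor; apply rsum_ext; intros i _.
  rewrite rsum_mult_r; apply rsum_ext; intros; ring.
Qed.

Lemma dot2_applyA_mixture nA nB E T M lam (a b : nat -> vec) :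
  dot2 nA nB E (applyA nA T (fun i j => rsum M (fun k => lam k * a k i * b k j))) =
  rsum M (fun k => lam k * dot nA (cond_effect nB E (b k)) (apply1 nA T (a k))).
Proof.
  unfold dot2, dot, cond_effect, applyA, apply1.
  transitivity (rsum (S nA) (fun i => rsum M (fun k => rsum (S nB) (fun j =>
      rsum (S nA) (fun l => lam k * (E i j * b k j) * (T i l * a k l)))))).
  - apply rsum_ext; intros i _.
    rewrite <- rsum_swap; apply rsum_ext; intros j _.
    rewrite rsum_mult_l.
    rewrite (rsum_ext (S nA) _
               (fun l => rsum M (fun k => E i j * (T i l * (lam k * a k l * b k j)))))
      by (intros; rewrite !rsum_mult_l; reflexivity).
    rewrite rsum_swap; apply rsum_ext; intros k _; apply rsum_ext; intros; ring.
  - rewrite rsum_swap; apply rsum_ext; intros k _.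
    rewrite rsum_mult_l; apply rsum_ext; intros i _.
    rewrite rsum_mult_r, rsum_mult_l; apply rsum_ext; intros j _.
    rewrite !rsum_mult_l; apply rsum_ext; intros; ring.
Qed.

Lemma gpt_state_normalized n Om w : gpt_state_space n Om -> Om w -> w 0%nat = 1.
Proof.
  intros [Rs [_ [_ [_ [_ HOm]]]]] Hw.
  apply HOm in Hw as [r [_ ->]]; reflexivity.
Qed.

Lemma min_tensor_product OmA OmB w b :
  OmA w -> OmB b -> min_tensor OmA OmB (tensor w b).
Proof.
  intros Hw Hb.
  exists 1%nat, (fun _ => 1), (fun _ => w), (fun _ => b).
  split; [intros; repeat split; auto; lra|split; [simpl; ring|]].
  unfold tensor; extensionality i; extensionality j; simpl; ring.
Qed.

Lemma cond_effect_effect nA nB OmA OmB E b :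
  joint_effect nA nB (min_tensor OmA OmB) E -> OmB b ->
  effect nA OmA (cond_effect nB E b).
Proof.
  intros [Hsupp Hval] Hb; split.
  - intros i Hi; unfold cond_effect.
    rewrite (rsum_ext _ _ (fun _ => 0)) by (intros; rewrite Hsupp by auto; ring).
    apply rsum_const0.
  - intros w Hw; rewrite <- dot2_tensor.
    apply Hval, min_tensor_product; assumption.
Qed.

Lemma cond_effect_sum nB K (E : nat -> mat) b i :
  (forall i j, rsum K (fun y => E y i j) = tensor unit_eff unit_eff i j) ->
  b 0%nat = 1 ->
  rsum K (fun y => cond_effect nB (E y) b i) = unit_eff i.
Proof.
  intros HE Hb0; unfold cond_effect; rewrite rsum_swap.
  rewrite (rsum_ext _ _ (fun j => unit_eff i * (unit_eff j * b j)))
    by (intros; rewrite <- rsum_mult_r, HE; unfold tensor; ring).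
  rewrite <- rsum_mult_l, rsum_unit_eff, Hb0; ring.
Qed.

Lemma conditioned_protocol_classical nA nB OmA OmB m p (om : nat -> vec) K
    (E : nat -> mat) b :
  gpt_state_space nB OmB -> OmB b -> prob_dist m p ->
  (forall x, (x < m)%nat -> OmA (om x)) ->
  (forall y, (y < K)%nat -> joint_effect nA nB (min_tensor OmA OmB) (E y)) ->
  (forall i j, rsum K (fun y => E y i j) = tensor unit_eff unit_eff i j) ->
  classical_values nA OmA
    (mutual_info m K p (fun x y => dot nA (cond_effect nB (E y) b) (om x))).
Proof.
  intros HB Hb Hp Hom HE HEsum.
  exists m, p, om, K, (fun y => cond_effect nB (E y) b).
  split; [exact Hp|split; [exact Hom|split; [|split]]].
  - intros y Hy; apply (cond_effect_effect _ _ _ OmB); [apply HE|]; assumption.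
  - intros i; apply cond_effect_sum; [exact HEsum|].
    apply (gpt_state_normalized nB OmB); assumption.
  - reflexivity.
Qed.

Theorem proposition4 (nA nB : nat) (OmA OmB : vec -> Prop)
    (HA : gpt_state_space nA OmA) (HB : gpt_state_space nB OmB)
    (Tset : mat -> Prop)
    (HT : forall T, Tset T -> allowed_local nA nB OmA (min_tensor OmA OmB) T) :
  forall c : R,
    is_upper_bound (classical_values nA OmA) c ->
    is_upper_bound (dc_values nA nB OmA (min_tensor OmA OmB) Tset) c.
Proof.
  intros c Hc v [phi [[M [lam [a [b [Hab [Hlam1 ->]]]]]]
                      [m [p [T [K [E [Hp [HTx [HE [HEsum ->]]]]]]]]]]].
  set (Q k x y := dot nA (cond_effect nB (E y) (b k)) (apply1 nA (T x) (a k))).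
  assert (HTa : forall k x, (k < M)%nat -> (x < m)%nat -> OmA (apply1 nA (T x) (a k)))
    by (intros k x Hk Hx; apply (HTx x Hx), (Hab k Hk)).
  assert (Heff : forall k y, (k < M)%nat -> (y < K)%nat ->
                   effect nA OmA (cond_effect nB (E y) (b k)))
    by (intros k y Hk Hy; apply (cond_effect_effect _ _ _ OmB);
        [apply HE|apply Hab]; assumption).
  assert (HQc : forall k, (k < M)%nat -> mutual_info m K p (Q k) <= c)
    by (intros k Hk; apply Hc, conditioned_protocol_classical with OmB;
        try apply Hab; auto).
  replace (fun x y => _) with (fun x y => rsum M (fun k => lam k * Q k x y))
    by (extensionality x; extensionality y; symmetry; apply dot2_applyA_mixture).
  eapply Rle_trans; [apply mutual_info_convex|].
  - apply Hp.
  - apply Hab.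
  - intros k x y Hk Hx Hy; apply (Heff k y Hk Hy), HTa; assumption.
  - rewrite <- (Rmult_1_l c), <- Hlam1, rsum_mult_r.
    apply rsum_le; intros k Hk.
    apply Rmult_le_compat_l; [apply Hab|apply HQc]; assumption.
Qed.
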